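(* Assume $M$ has genus zero and $a+b=1$ (so $a,b\in(0,1)$). Let $p=\frac{q'}{q'+a^{-1}-1}$. Then the marginal law of $\omega$ under $\mathbf P$ is $$\mathbf P(\omega)\propto (qq')^{k(\omega)}p^{|\omega|}(1-p)^{|\mathsf E\setminus\omega|},\qquad\omega\subseteq\mathsf E,$$ i.e. the $\mathrm{FK}(qq')$ random cluster model on $\mathsf G$ with parameter $p$ and free boundary conditions.
   Context: $M$ is the sphere or the plane. Let $\mathsf G=(\mathsf V,\mathsf E)$ be a finite connected graph embedded in $M$ with all faces topological discs, and $\mathsf G^*=(\mathsf U,\mathsf E^* )$ its embedded dual ($\mathsf U$ = faces of $\mathsf G$); $e^*$ is the dual edge crossing $e$, $\xi^*=\{e^*:e\in\xi\}$. Fix integers $q,q'\ge1$, finite $Q,Q'\subset\mathbb C$ with $Q=-Q$, $Q'=-Q'$, $|Q|=q$, $|Q'|=q'$, and $a,b\in(0,1]$. For $\sigma:\mathsf V\to Q$, $\eta(\sigma)\subseteq\mathsf E^*$ is the set of $e^*$ whose primal $e$ has endpoints with different $\sigma$-values; for $\sigma':\mathsf U\to Q'$, $\eta(\sigma')\subseteq\mathsf E$ is the set of $e$ whose dual $e^*$ has endpoints with different $\sigma'$-values. $\mathbf P(\sigma,\sigma')\propto a^{|\eta(\sigma')|}b^{|\eta(\sigma)|}$ on $\Sigma=\{(\sigma,\sigma'):\eta(\sigma)^*\cap\eta(\sigma')=\emptyset\}$. Percolation (here for $a+b=1$): given $(\sigma,\sigma')$, every edge of $\eta(\sigma')$ and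 every dual edge of $\eta(\sigma)$ is open; for each pair $(e,e^* )$ with $e\notin\eta(\sigma')$, $e^*\notin\eta(\sigma)$, independently, $e$ is open and $e^*$ closed with probability $1-b=a$, and $e$ closed and $e^*$ open with probability $1-a=b$. $\omega\subseteq\mathsf E$ is the set of open primal edges; $\mathbf P$ denotes the joint law. $k(\omega)$ is the number of connected components of $(\mathsf V,\omega)$, isolated vertices included. *)

From HB Require Import structures.
From mathcomp Require Import all_boot all_order all_fingroup all_algebra.
From mathcomp Require Import complex.
From mathcomp Require Import reals.
Set Implicit Arguments. Unset Strict Implicit. Unset Printing Implicit Defensive.
Import Order.TTheory GRing.Theory Num.Theory.
Local Open Scope ring_scope.

(* Cellularly embedded graphs in an orientable surface, encoded combinatorially
   by a rotation system (Heffter-Edmonds).  Edges are a finType [Ed]; each edge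
   e has two darts (e,true),(e,false); [dflip] exchanges them.  [rot] is the
   rotation (cyclic order of darts around each vertex); vertices are the
   orbits of [rot] (represented by the type [Vx] with the map [vert]); faces
   are the orbits of [rot \o dflip] (type [Fc], map [face]).  The primal edge e
   joins vert (e,true) and vert (e,false); the dual edge e^* joins the two
   faces face (e,true), face (e,false) on the two sides of e.  The degenerate
   one-vertex edgeless graph is allowed separately.  Genus zero (sphere /
   plane) is expressed by Euler's formula |V| - |E| + |U| = 2.                *)

Definition dflip (T : Type) (d : (T * bool)%type) : (T * bool)%type := (d.1, ~~ d.2).

Definition face_perm (T : finType) (rot : {perm ((T * bool)%type)}) (d : (T * bool)%type) :=
  rot (dflip d).

Definition adj_in (E V : finType) (vert : (E * bool)%type -> V) (w : {set E}) : rel V :=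
  fun x y => [exists e in w,
    ((vert (e, true) == x) && (vert (e, false) == y)) ||
    ((vert (e, false) == x) && (vert (e, true) == y))].

Record planar_map := PlanarMap {
  Ed : finType;
  Vx : finType;
  Fc : finType;
  rot : {perm ((Ed * bool)%type)};
  vert : (Ed * bool)%type -> Vx;
  face : (Ed * bool)%type -> Fc;
  vert_orbits : forall d d', vert d = vert d' <-> fconnect rot d d';
  face_orbits : forall d d', face d = face d' <-> fconnect (face_perm rot) d d';
  covering : (forall v, exists d, vert d = v) /\ (forall u, exists d, face d = u)
             \/ [/\ #|Ed| = 0%N, #|Vx| = 1%N & #|Fc| = 1%N];
  connected : forall x y : Vx, connect (adj_in vert [set: Ed]) x y;
  genus_zero : (#|Vx| + #|Fc| = #|Ed| + 2)%N
}.

Section Model.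
Variable (R : realType) (G : planar_map).
Variables (Q Q' : seq R[i]) (a b : R).

Definition spinV := {ffun Vx G -> seq_sub Q}.
Definition spinF := {ffun Fc G -> seq_sub Q'}.

(* eta(sigma): edges e whose dual e^* lies in eta(sigma), i.e. the endpoints
   of the primal edge e carry different sigma-values. *)
Definition etaV (s : spinV) : {set Ed G} :=
  [set e | s (vert (e, true)) != s (vert (e, false))].
Definition etaF (s' : spinF) : {set Ed G} :=
  [set e | s' (face (e, true)) != s' (face (e, false))].

(* joint (unnormalised) weight of (sigma, sigma', omega):
   a^{|eta(sigma')|} b^{|eta(sigma)|} on Sigma, times the percolation
   probabilities of the free pairs: edges of eta(sigma') are open, edges whose
   dual is in eta(sigma) are closed, the others open w.p. a, closed w.p. b. *)
Definition joint_weight (s : spinV) (s' : spinF) (w : {set Ed G}) : R :=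
  if [&& [disjoint etaV s & etaF s'], etaF s' \subset w & [disjoint w & etaV s]]
  then a ^+ #|etaF s'| * b ^+ #|etaV s|
       * a ^+ #|w :\: etaF s'| * b ^+ #|~: w :\: etaV s|
  else 0.

Definition joint_total : R :=
  \sum_(s : spinV) \sum_(s' : spinF) \sum_(w : {set Ed G}) joint_weight s s' w.

Definition omega_marginal (w : {set Ed G}) : R :=
  (\sum_(s : spinV) \sum_(s' : spinF) joint_weight s s' w) / joint_total.
End Model.

Definition ncomp (G : planar_map) (w : {set Ed G}) : nat :=
  #|[set x : Vx G | fingraph.root (adj_in (@vert G) w) x == x]|.

Definition rc_weight (R : realType) (G : planar_map) (Qc : nat) (p : R)
  (w : {set Ed G}) : R :=
  Qc%:R ^+ ncomp w * p ^+ #|w| * (1 - p) ^+ #|~: w|.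

Definition rc_law (R : realType) (G : planar_map) (Qc : nat) (p : R)
  (w : {set Ed G}) : R :=
  rc_weight Qc p w / \sum_(w' : {set Ed G}) rc_weight Qc p w'.

(* Given omega, the compatible spin configurations are the sigma constant on the
   clusters of omega and the sigma' constant on the clusters of the dual graph
   with edge set (E \ omega)^*, each with weight a^|omega| b^|E \ omega|.  So the
   marginal of omega is proportional to q^k(omega) q'^k*(omega) a^|omega| b^|E \ omega|,
   where k* counts dual clusters.  On the sphere k*(omega) + |V| = k(omega) + |omega| + 1,
   which turns this weight into (q q')^k(omega) (q' a)^|omega| b^|E \ omega|, i.e.
   FK(q q') with p = q' a / (q' a + b).
   For this Euler relation, adding an edge e to omega cannot increase the defect
   k*(omega) + |V| - k(omega) - |omega| - 1: if the ends of e are already joined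
   in omega, k is unchanged and k* grows by at most one; otherwise the two faces
   of e are already joined in the dual without e^*, since else, around the
   vertices of the omega-cluster of one end of e, the darts where the rotation
   enters or leaves the dual cluster of one face of e would be both even and odd
   in number.  The defect vanishes for omega empty and, by Euler's formula for G,
   for omega = E, hence everywhere. *)

From Pilot Require Import Defs.
From HB Require Import structures.
From mathcomp Require Import all_boot all_order all_fingroup all_algebra.
From mathcomp Require Import complex.
From mathcomp Require Import reals.
From mathcomp Require Import zify ring lra.
Import Order.TTheory GRing.Theory Num.Theory.
Set Implicit Arguments. Unset Strict Implicit. Unset Printing Implicit Defensive.

Lemma connect_ind (T : finType) (e : rel T) x (P : T -> Prop) :
  P x -> (forall y z, P y -> e y z -> P z) -> forall y, connect e x y -> P y.
Proof.
move=> Px stepP y /connectP[p pth ->]; elim: p x Px pth => //= z p IHp x Px.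
by case/andP=> exz pz; exact: IHp (stepP _ _ Px exz) pz.
Qed.

Section Components.
Variables (E V : finType) (vm : E * bool -> V).

Definition ncomp_in (A : {set E}) := n_comp (adj_in vm A) V.

Definition joins e x y :=
  (vm (e, true) == x) && (vm (e, false) == y) ||
  (vm (e, false) == x) && (vm (e, true) == y).

Lemma adj_inE A x y : adj_in vm A x y = [exists e in A, joins e x y].
Proof. by []. Qed.

Lemma joins_sym e : symmetric (joins e).
Proof. by move=> x y; rewrite /joins orbC; congr (_ || _); exact: andbC. Qed.

Lemma adj_in_sym A : symmetric (adj_in vm A).
Proof.
move=> x y; rewrite !adj_inE.
by apply/existsP/existsP => -[e]; exists e; rewrite joins_sym.
Qed.

Lemma connect_adj_in_sym A : connect_sym (adj_in vm A).
Proof. exact/sym_connect_sym/adj_in_sym. Qed.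

Lemma adj_in_setU1 A e x y :
  adj_in vm (e |: A) x y = joins e x y || adj_in vm A x y.
Proof.
rewrite !adj_inE; apply/existsP/orP => [[e' /andP[]]|[exy|/existsP[e' /andP[e'A]]]].
- rewrite in_setU1 => /orP[/eqP-> | e'A] h; first by left.
  by right; apply/existsP; exists e'; rewrite e'A.
- by exists e; rewrite setU11.
- by exists e'; rewrite in_setU1 e'A orbT.
Qed.

Local Notation linked A := (connect (adj_in vm A)).

Definition reaches_end A e x := linked A x (vm (e, true)) || linked A x (vm (e, false)).

Lemma reaches_end_trans A e x y :
  linked A x y -> reaches_end A e y -> reaches_end A e x.
Proof. by move=> xy /orP[] ye; rewrite /reaches_end (connect_trans xy ye) ?orbT. Qed.

Lemma connect_adj_in_setU1 A e u v : linked (e |: A) u v ->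
  linked A u v \/ reaches_end A e u /\ reaches_end A e v.
Proof.
elim/connect_ind => [|y z IHy]; first by left.
rewrite adj_in_setU1 => /orP[eyz | Ayz].
  have [ey ez] : reaches_end A e y /\ reaches_end A e z.
    by case/orP: eyz => /andP[/eqP<- /eqP<-]; rewrite /reaches_end !connect0 !orbT.
  by right; split=> //; case: IHy => [uy|[]//]; exact: reaches_end_trans ey.
have yz : linked A y z := connect1 Ayz.
case: IHy => [uy|[ue ye]]; first by left; exact: connect_trans uy yz.
right; split=> //; apply: reaches_end_trans ye.
by rewrite connect_adj_in_sym.
Qed.

Lemma connect_adj_in_setU1_eq A e :
  linked A (vm (e, true)) (vm (e, false)) -> linked (e |: A) =2 linked A.
Proof.
move=> ends u v; apply/idP/idP; last first.
  by apply: connect_sub => x y Axy; apply: connect1; rewrite adj_in_setU1 Axy orbT.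
have to_true x : reaches_end A e x -> linked A x (vm (e, true)).
  by case/orP=> // xf; rewrite (connect_trans xf) // connect_adj_in_sym.
case/connect_adj_in_setU1 => [//|[/to_true ue /to_true ve]].
by rewrite (connect_trans ue) // connect_adj_in_sym.
Qed.

Lemma ncomp_in_setU1_eq A e :
  linked A (vm (e, true)) (vm (e, false)) -> ncomp_in (e |: A) = ncomp_in A.
Proof. by move=> ends; exact: (eq_n_comp (connect_adj_in_setU1_eq ends)). Qed.

Lemma ncomp_inE A : ncomp_in A = #|[set x | fingraph.root (adj_in vm A) x == x]|.
Proof. by apply: eq_card => x; rewrite !inE andbT. Qed.

Lemma ncomp_in_setU1_ge A e : (ncomp_in A <= (ncomp_in (e |: A)).+1)%N.
Proof.
have symA := connect_adj_in_sym A; have symAe := connect_adj_in_sym (e |: A).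
rewrite !ncomp_inE.
set rootsA := [set x | _ == x]; set rootsAe := [set x | _ == x].
set r := fingraph.root (adj_in vm (e |: A)).
set r_false := fingraph.root (adj_in vm A) (vm (e, false)).
have r_inj : {in rootsA :\ r_false &, injective r}.
  have to_true x : x != r_false -> fingraph.root (adj_in vm A) x = x ->
      reaches_end A e x -> linked A x (vm (e, true)).
    move=> xf rx /orP[//|/(fingraph.rootP symA)]; rewrite rx => xfE.
    by rewrite xfE eqxx in xf.
  move=> x y; rewrite !inE => /andP[xf /eqP rx] /andP[yf /eqP ry].
  move/(fingraph.rootP symAe)/connect_adj_in_setU1 => [/(fingraph.rootP symA)|[ue ve]].
    by rewrite rx ry.
  rewrite -rx -ry; apply/(fingraph.rootP symA); rewrite (connect_trans (to_true x xf rx ue)) //.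
  by rewrite connect_adj_in_sym to_true.
have sub : r @: (rootsA :\ r_false) \subset rootsAe.
  by apply/subsetP => _ /imsetP[x _ ->]; rewrite inE fingraph.root_root.
rewrite (cardsD1 r_false rootsA); have := subset_leq_card sub.
by rewrite card_in_imset //; case: (r_false \in rootsA) => /= h; rewrite ?ltnS // ltnW.
Qed.

Definition constant_on_edges (T : eqType) (A : {set E}) (s : V -> T) :=
  [forall e in A, s (vm (e, true)) == s (vm (e, false)) :> T].

Lemma constant_on_edges_connect (T : eqType) A (s : V -> T) x y :
  constant_on_edges A s -> linked A x y -> s x = s y.
Proof.
move=> sA; elim/connect_ind=> // y' z -> /existsP[e /andP[eA eyz]].
by have /eqP := implyP (forallP sA e) eA; case/orP: eyz => /andP[/eqP<- /eqP<-].
Qed.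

Lemma card_constant_on_edges (T : finType) A :
  #|[set s : {ffun V -> T} | constant_on_edges A s]| = (#|T| ^ ncomp_in A)%N.
Proof.
have symA := connect_adj_in_sym A.
pose rootsA := {x : V | roots (adj_in vm A) x}.
pose root_of x : rootsA := exist (fun y => roots (adj_in vm A) y) _ (roots_root symA x).
pose extend (g : {ffun rootsA -> T}) := [ffun x => g (root_of x)] : {ffun V -> T}.
have root_of_val r : root_of (val r) = r by apply: val_inj; apply/eqP; exact: (valP r).
have extend_inj : injective extend.
  by move=> g1 g2 /ffunP eq_g; apply/ffunP => r; have := eq_g (val r); rewrite !ffunE root_of_val.
have -> : [set s : {ffun V -> T} | constant_on_edges A s] = extend @: setT.
  apply/setP => s; rewrite inE; apply/idP/imsetP => [sA | [g _ ->]].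
    exists [ffun r => s (val r)] => //; apply/ffunP => x; rewrite !ffunE.
    exact: constant_on_edges_connect sA (connect_root _ x).
  apply/forallP => e; apply/implyP => eA; rewrite !ffunE; apply/eqP; congr (g _).
  apply: val_inj; apply/(fingraph.rootP symA)/connect1/existsP.
  by exists e; rewrite eA !eqxx.
rewrite card_imset // cardsT card_ffun card_sig.
by congr (_ ^ _)%N; apply: eq_card => x; rewrite !inE andbT.
Qed.

Lemma ncomp_in_set0 : ncomp_in set0 = #|V|.
Proof.
apply: eq_card => x; rewrite !inE andbT; apply/eqP.
by elim/connect_ind: (connect_root (adj_in vm set0) x) => // y z _ /existsP[e]; rewrite inE.
Qed.

Lemma ncomp_in_connected A x0 : (forall y, linked A x0 y) -> ncomp_in A = 1%N.
Proof.
move=> x0y; rewrite /ncomp_in -(n_comp_connect (connect_adj_in_sym A) x0).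
by apply: eq_n_comp_r => y; rewrite !inE x0y.
Qed.

End Components.

Lemma even_sum_perm_changes (T : finType) (r : {perm T}) (P f : pred T) :
  (forall x, P (r x) = P x) -> ~~ odd (\sum_(x | P x) (f x != f (r x))).
Proof.
move=> rP.
have sum_r : \sum_(x | P x) f (r x) = \sum_(x | P x) f x.
  rewrite [RHS](reindex_inj (@perm_inj _ r)) /=.
  by apply: eq_bigl => x; rewrite rP.
have : \sum_(x | P x) (f x != f (r x)) + (\sum_(x | P x) (f x && f (r x))).*2 =
       (\sum_(x | P x) f x).*2.
  rewrite -!addnn -{2}sum_r -!big_split /=.
  by apply: eq_bigr => x _; case: (f x); case: (f (r x)).
by move/(congr1 odd); rewrite oddD !odd_double addbF => ->.
Qed.

Section PlanarMap.
Variable G : planar_map.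
Local Notation D := (Ed G * bool)%type.
Local Notation rot := (@Defs.rot G).
Local Notation vert := (@vert G).
Local Notation face := (@face G).

Lemma vert_rot d : vert (rot d) = vert d.
Proof. by apply/esym/vert_orbits; exact: fconnect1. Qed.

Lemma dflipK : involutive (@dflip (Ed G)).
Proof. by case=> x y; rewrite /dflip /= negbK. Qed.

Lemma face_rot d : face (rot d) = face (dflip d).
Proof.
have -> : rot d = face_perm rot (dflip d) by rewrite /face_perm dflipK.
by apply/esym/face_orbits; exact: fconnect1.
Qed.

Lemma dual_connect_of_not_connect (w : {set Ed G}) e : e \notin w ->
  ~~ connect (adj_in vert w) (vert (e, true)) (vert (e, false)) ->
  connect (adj_in face (~: w :\ e)) (face (e, true)) (face (e, false)).
Proof.
move=> ew not_ve; apply/negPn/negP => not_fe.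
set C := connect (adj_in vert w) (vert (e, true)).
set S := connect (adj_in face (~: w :\ e)) (face (e, true)).
pose f (d : D) : nat := C (vert d) && (S (face d) != S (face (dflip d))).
have sumE : \sum_(d | C (vert d)) (S (face d) != S (face (rot d))) =
            \sum_(e' : Ed G) (f (e', true) + f (e', false)).
  rewrite big_mkcond (_ : \sum_(d : D) _ = \sum_(e' : Ed G) \sum_(b : bool) f (e', b)).
    by apply: eq_bigr => e' _; rewrite big_bool.
  by rewrite pair_bigA; apply: eq_bigr => -[e' b] _; rewrite /f face_rot; case: (C _).
have e_term : f (e, true) + f (e, false) = 1%N.
  by rewrite /f /= /C connect0 (negbTE not_ve) /S connect0 not_fe.
have other_term e' : e' != e -> ~~ odd (f (e', true) + f (e', false)).
  move=> e'e; rewrite /f /= eq_sym.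
  case e'w : (e' \in w).
    suff -> : C (vert (e', false)) = C (vert (e', true)) by rewrite addnn odd_double.
    apply/esym/(same_connect_r (connect_adj_in_sym _ _))/connect1/existsP.
    by exists e'; rewrite e'w !eqxx.
  suff -> : S (face (e', true)) = S (face (e', false)) by rewrite eqxx !andbF.
  apply: (same_connect_r (connect_adj_in_sym _ _)); apply/connect1/existsP.
  by exists e'; rewrite !inE e'w e'e !eqxx.
have := even_sum_perm_changes (fun d => S (face d)) (fun d => congr1 C (vert_rot d)).
rewrite sumE (bigD1 e) //= oddD e_term /=; apply/negP; rewrite negbK.
apply: (big_ind (fun n => ~~ odd n)) => // m n.
by rewrite oddD => /negbTE-> /negbTE->.
Qed.

Lemma card_Vx_Fc_gt0 : (0 < #|Vx G|)%N /\ (0 < #|Fc G|)%N.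
Proof.
case: (covering G) => [[onto_v onto_f]|[_ -> ->]] //.
suff [d _] : exists d : D, True.
  by split; apply/card_gt0P; [exists (vert d) | exists (face d)].
have := genus_zero G; case: (posnP #|Vx G|) => [-> eul | /card_gt0P[v _] _].
  have /card_gt0P[u _] : (0 < #|Fc G|)%N by rewrite -(add0n #|Fc G|) eul addn2.
  by have [d _] := onto_f u; exists d.
by have [d _] := onto_v v; exists d.
Qed.

Lemma ncomp_in_vert_setT : ncomp_in vert setT = 1%N.
Proof.
have [/card_gt0P[x0 _] _] := card_Vx_Fc_gt0.
exact: ncomp_in_connected (connected x0).
Qed.

Local Notation dual_connect := (connect (adj_in face setT)).

Lemma dual_connect_flip d : dual_connect (face d) (face (dflip d)).
Proof.
apply/connect1/existsP; exists d.1; rewrite inE /=.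
by case: d => e [] /=; rewrite /dflip /= !eqxx ?orbT.
Qed.

Lemma dual_connect_vert d d' : vert d = vert d' -> dual_connect (face d) (face d').
Proof.
move/vert_orbits; elim/connect_ind => // y z yz /eqP <-.
by apply: connect_trans yz _; rewrite face_rot; exact: dual_connect_flip.
Qed.

Lemma ncomp_in_face_setT : ncomp_in face setT = 1%N.
Proof.
have [_ /card_gt0P[u0 _]] := card_Vx_Fc_gt0.
apply: (ncomp_in_connected (x0 := u0)) => u.
case: (covering G) => [[_ onto_f]|[_ _ /eq_leq /card_le1_eqP oneF]]; last first.
  by rewrite (oneF u u0).
have [[d0 <-] [d <-]] := (onto_f u0, onto_f u).
pose P v := forall d', vert d' = v -> dual_connect (face d0) (face d').
suff /(_ d erefl) : P (vert d) by [].
elim/connect_ind: (connected (vert d0) (vert d)) => [d' /esym|y z IHy].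
  exact: dual_connect_vert.
case/existsP=> e /andP[_ eyz] d' d'z.
have step b : vert (e, b) = y -> vert (e, ~~ b) = z -> dual_connect (face d0) (face d').
  move=> ey ez; apply: connect_trans (IHy _ ey) _.
  apply: connect_trans (dual_connect_flip (e, b)) _.
  by apply: dual_connect_vert; rewrite /dflip /= ez d'z.
by case/orP: eyz => /andP[/eqP ey /eqP ez]; [exact: (step true) | exact: (step false)].
Qed.

Definition dual_side (w : {set Ed G}) := (ncomp_in face (~: w) + #|Vx G|)%N.
Definition primal_side (w : {set Ed G}) := (ncomp_in vert w + #|w| + 1)%N.

Lemma euler_step (w : {set Ed G}) e : e \notin w ->
  (dual_side (e |: w) + primal_side w <= dual_side w + primal_side (e |: w))%N.
Proof.
move=> ew; rewrite /dual_side /primal_side cardsU1 ew.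
have -> : ~: (e |: w) = ~: w :\ e by rewrite setCU setIC setDE.
have {2}-> : ~: w = e |: (~: w :\ e) by rewrite setD1K // inE.
case cv : (connect (adj_in vert w) (vert (e, true)) (vert (e, false))).
  by rewrite (ncomp_in_setU1_eq cv); have := ncomp_in_setU1_ge face (~: w :\ e) e; lia.
rewrite (ncomp_in_setU1_eq (dual_connect_of_not_connect ew (negbT cv))).
by have := ncomp_in_setU1_ge vert w e; lia.
Qed.

Lemma euler_mono (w1 w2 : {set Ed G}) : w1 \subset w2 ->
  (dual_side w2 + primal_side w1 <= dual_side w1 + primal_side w2)%N.
Proof.
move=> sub; have [n] := ubnP #|w2 :\: w1|; elim: n w1 sub => // n IHn w1 sub lt_n.
have [/eqP|[e]] := set_0Vmem (w2 :\: w1).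
  by rewrite setD_eq0 => sub'; have -> : w2 = w1 by apply/eqP; rewrite eqEsubset sub sub'.
rewrite inE => /andP[ew1 ew2].
have sub' : e |: w1 \subset w2 by rewrite subUset sub1set ew2 sub.
have lt_n' : (#|w2 :\: (e |: w1)| < n)%N.
  rewrite setUC -setDDl -ltnS; apply: leq_trans lt_n; rewrite ltnS; apply: proper_card.
  by apply: properD1; rewrite inE ew1 ew2.
by have := IHn _ sub' lt_n'; have := euler_step ew1; lia.
Qed.

Theorem euler_subgraph (w : {set Ed G}) :
  (ncomp_in face (~: w) + #|Vx G| = ncomp_in vert w + #|w| + 1)%N.
Proof.
have := euler_mono (sub0set w); have := euler_mono (subsetT w).
rewrite /dual_side /primal_side setC0 setCT !ncomp_in_set0.
rewrite ncomp_in_face_setT ncomp_in_vert_setT cards0 cardsT.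
by have := genus_zero G; lia.
Qed.

Lemma ncompE (w : {set Ed G}) : ncomp w = ncomp_in vert w.
Proof. by rewrite ncomp_inE. Qed.

End PlanarMap.

Local Open Scope ring_scope.

Lemma ratio_sum_scale (F : fieldType) (I : finType) (f g : I -> F) c i :
  c != 0 -> (forall j, f j = c * g j) -> f i / \sum_j f j = g i / \sum_j g j.
Proof.
move=> c0 fg; rewrite (eq_bigr _ (fun j _ => fg j)) -mulr_sumr fg.
by rewrite invfM mulrACA divff // mul1r.
Qed.

Lemma rc_weight_scaled (R : realType) (G : planar_map) Qc (x y : R) (w : {set Ed G}) :
  x + y != 0 ->
  rc_weight Qc (x / (x + y)) w * (x + y) ^+ #|Ed G| =
  Qc%:R ^+ ncomp w * x ^+ #|w| * y ^+ #|~: w|.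
Proof.
move=> xy0; rewrite /rc_weight.
have -> : 1 - x / (x + y) = y / (x + y) by field.
rewrite -(cardsC w) exprD !expr_div_n.
by field; rewrite !expf_neq0.
Qed.

Section SpinModel.
Variables (R : realType) (G : planar_map) (Q Q' : seq R[i]) (a b : R).
Local Notation vert := (@vert G).
Local Notation face := (@face G).

Lemma disjoint_etaV (s : spinV G Q) (w : {set Ed G}) :
  [disjoint w & etaV s] = constant_on_edges vert w s.
Proof.
rewrite disjoint_subset; apply/subsetP/forallP => [wV e | sw e ew].
  by apply/implyP => /wV; rewrite !inE negbK.
by rewrite !inE negbK; exact: implyP (sw e) ew.
Qed.

Lemma etaF_subset (s' : spinF G Q') (w : {set Ed G}) :
  (etaF s' \subset w) = constant_on_edges face (~: w) s'.
Proof.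
apply/subsetP/forallP => [Fw e | sw e].
  by apply/implyP; rewrite inE; apply: contraR => /negbTE ne; apply: Fw; rewrite inE ne.
rewrite inE; apply: contraR => ew.
by have := implyP (sw e); rewrite inE ew; apply.
Qed.

Lemma joint_weightE (s : spinV G Q) (s' : spinF G Q') (w : {set Ed G}) :
  joint_weight a b s s' w =
  if constant_on_edges vert w s && constant_on_edges face (~: w) s'
  then a ^+ #|w| * b ^+ #|~: w| else 0.
Proof.
rewrite /joint_weight -disjoint_etaV -etaF_subset.
have [Fw|_] := boolP (etaF s' \subset w); last by rewrite !andbF.
have [wV|_] := boolP [disjoint w & etaV s]; last by rewrite !andbF.
have -> : [disjoint etaV s & etaF s'] by rewrite disjoint_sym (disjointWl Fw).
have Vw : etaV s \subset ~: w by rewrite subsets_disjoint setCK disjoint_sym.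
rewrite -(cardsID (etaF s') w) -(cardsID (etaV s) (~: w)) (setIidPr Fw) (setIidPr Vw).
by rewrite !exprD; ring.
Qed.

Lemma marginal_weightE (w : {set Ed G}) : uniq Q -> uniq Q' ->
  \sum_(s : spinV G Q) \sum_(s' : spinF G Q') joint_weight a b s s' w =
  (size Q ^ ncomp_in vert w * size Q' ^ ncomp_in face (~: w))%:R
  * (a ^+ #|w| * b ^+ #|~: w|).
Proof.
move=> uQ uQ'; set c := a ^+ #|w| * b ^+ #|~: w|.
rewrite -(card_seq_sub uQ) -(card_seq_sub uQ') -!card_constant_on_edges.
set A := [set s | _]; set B := [set s' | _].
transitivity (\sum_(s in A) \sum_(s' in B) c); last first.
  by rewrite sumr_const sumr_const -mulrnA mulr_natl mulnC.
rewrite [RHS]big_mkcond; apply: eq_bigr => s _; rewrite inE; case: ifP => sA.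
  by rewrite [RHS]big_mkcond; apply: eq_bigr => s' _; rewrite joint_weightE sA inE.
by apply: big1 => s' _; rewrite joint_weightE sA.
Qed.

Lemma marginal_weight_euler (w : {set Ed G}) : uniq Q -> uniq Q' ->
  let q'R := (size Q')%:R in
  (\sum_(s : spinV G Q) \sum_(s' : spinF G Q') joint_weight a b s s' w) * q'R ^+ #|Vx G|
  = q'R * ((size Q * size Q')%:R ^+ ncomp w * (q'R * a) ^+ #|w| * b ^+ #|~: w|).
Proof.
move=> uQ uQ' q'R; rewrite marginal_weightE // !natrM !natrX -/q'R ncompE.
have euler : q'R ^+ ncomp_in face (~: w) * q'R ^+ #|Vx G| =
    q'R ^+ ncomp_in vert w * q'R ^+ #|w| * q'R.
  by rewrite -exprD euler_subgraph !exprD expr1.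
rewrite !exprMn; transitivity ((q'R ^+ ncomp_in face (~: w) * q'R ^+ #|Vx G|) *
  ((size Q)%:R ^+ ncomp_in vert w * a ^+ #|w| * b ^+ #|~: w|)); first ring.
by rewrite euler; ring.
Qed.

End SpinModel.

Theorem proposition2p1 (R : realType) (G : planar_map) (q q' : nat)
    (Q Q' : seq R[i]) (a b : R) :
  (1 <= q)%N -> (1 <= q')%N ->
  uniq Q -> size Q = q -> (forall x, x \in Q -> - x \in Q) ->
  uniq Q' -> size Q' = q' -> (forall x, x \in Q' -> - x \in Q') ->
  0 < a <= 1 -> 0 < b <= 1 -> a + b = 1 ->
  let p := q'%:R / (q'%:R + a^-1 - 1) in
  forall w : {set Ed G},
    omega_marginal Q Q' a b w = rc_law (q * q') p w.
Proof.
move=> _ q'_gt0 uQ sQ _ uQ' sQ' _ /andP[a_gt0 _] /andP[b_gt0 _] ab p w.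
pose m w := \sum_(s : spinV G Q) \sum_(s' : spinF G Q') joint_weight a b s s' w.
have marginalE : omega_marginal Q Q' a b w = m w / \sum_w' m w'.
  rewrite /omega_marginal /joint_total; congr (_ / _).
  under eq_bigr do rewrite exchange_big.
  exact: exchange_big.
set x := q'%:R * a.
have q'_neq0 : q'%:R != 0 :> R by rewrite pnatr_eq0 -lt0n.
have xb_neq0 : x + b != 0 by rewrite gt_eqF // ltr_wpDl // mulr_ge0 ?ler0n ?ltW.
have p_eq : p = x / (x + b).
  have b_eq : b = 1 - a by lra.
  by rewrite /p /x b_eq; field; rewrite -b_eq xb_neq0 gt_eqF.
rewrite marginalE /rc_law p_eq; symmetry.
apply: (ratio_sum_scale (c := q'%:R ^+ #|Vx G| / (q'%:R * (x + b) ^+ #|Ed G|))) => [|w'].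
  by rewrite mulf_neq0 ?invr_eq0 ?mulf_neq0 ?expf_neq0.
apply: (mulIf (expf_neq0 #|Ed G| xb_neq0)); rewrite rc_weight_scaled //.
apply: (mulfI q'_neq0); have := marginal_weight_euler a b w' uQ uQ'; rewrite sQ sQ' -/x => <-.
by rewrite /m; field; rewrite (expf_neq0 _ xb_neq0).
Qed.
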